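(* Let $m\in\mathbb Z_{\ge0}$, let $\lambda/\mu$ be an r-shape and $\mathbf a,\mathbf b$ column flags for it with conjugates $\mathbf a',\mathbf b'$. Write $\tau(k)=-k+1$, $\eta(k)=k-m$, $u_j=\max(1,a_j)$, $v_i=\min(m,b_i)$, and set $\alpha_i=\beta_i=0$ for $i\le0$. Then $$\mathsf g^{\mathbf a,\mathbf b}_{\lambda/\mu}(\mathbf x_m;\boldsymbol\alpha,\boldsymbol\beta)=\det\left[e_{\lambda'_i-i-\mu'_j+j}\left(\mathbf x_{u_j,v_i},\overline{\boldsymbol\alpha}_{\tau(b_i),\tau(a_j)},\boldsymbol\beta_{\eta(a_j),\eta(b_i)}\,/\,\overline{\boldsymbol\alpha}_{\eta(a'_j),\eta(b'_i)},\boldsymbol\beta_{\tau(b'_i),\tau(a'_j)}\right)\right]_{1\le i,j\le n}$$ for $n\ge\lambda_1$. In particular, if $\lambda/\mu$ is a usual skew shape and $a_i=-i+2$, $b_i=\lambda'_i+m-1$ for $i\in[n]$, then $\mathsf S^{\mathbf a,\mathbf b}_{\lambda/\mu}(\mathbf y/\mathbf z)|_g=\mathsf g^{\mathbf a,\mathbf b}_{\lambda/\mu}(\mathbf x_m;\boldsymbol\alpha,\boldsymbol\beta)=g_{\lambda/\mu}(\mathbf x_m;\boldsymbol\alpha,\boldsymbol\beta)$.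
   Context: Young diagrams in English notation; $\lambda'$ conjugate partition. An r-shape is $(\lambda/\mu,r)$ with shifted contents $c(i,j)=j-i+r-1+\lambda'_1$; a usual skew shape has $c(i,j)=j-i$. Column flags: for $n\ge\lambda_1$, $\mathbf a,\mathbf b\in\mathbb Z^n$ with $a_i-a_{i+1}\le\mu'_i-\mu'_{i+1}+1$, $b_i-b_{i+1}\le\lambda'_i-\lambda'_{i+1}+1$ whenever $\mu'_i<\lambda'_{i+1}$; conjugate flags $a'_i=a_i+c(\gamma_i)$, $b'_i=b_i+c(\delta_i)$ ($\gamma_i,\delta_i$ top and bottom cells of column $i$). For a sequence of variables $\mathbf w$, $\mathbf w_{p,q}=(w_p,\ldots,w_q)$ (empty if $p>q$), $\mathbf w_k=\mathbf w_{1,k}$, $\overline{\mathbf w}=(-w_i)$; commas between variable sets denote their union. $e_n(\mathbf x/\mathbf w)=\sum_{i=0}^n(-1)^{n-i}e_i(\mathbf x)h_{n-i}(\mathbf w)$ ($e_0=1$, $e_n=0$ for $n<0$). With $\mathbf y=(y_i)_{i\in\mathbb Z},\mathbf z=(z_i)_{i\in\mathbb Z}$: $\mathsf S^{\mathbf a,\mathbf b}_{\lambda/\mu}(\mathbf y/\mathbf z)=\det[e_{\lambda'_i-i-\mu'_j+j}(\mathbf y_{a_j,b_i}/\mathbf z_{a'_j,b'_i})]_{1\le i,j\le n}$. The $g$-specialization (for given $m$) substitutes $y_i\mapsto x_i$ ($i\in[m]$), $y_i\mapsto\beta_{i-m}$ ($i>m$), $y_i\mapsto-\alpha_{-i+1}$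 ($i\le0$), and $z_i\mapsto0$ ($i\in[m]$), $z_i\mapsto-\alpha_{i-m}$ ($i>m$), $z_i\mapsto\beta_{-i+1}$ ($i\le0$). The flagged dual Grothendieck enumerator is $\mathsf g^{\mathbf a,\mathbf b}_{\lambda/\mu}(\mathbf x_m;\boldsymbol\alpha,\boldsymbol\beta)=\mathsf S^{\mathbf a,\mathbf b}_{\lambda/\mu}(\mathbf y/\mathbf z)|_g$. The dual refined canonical stable Grothendieck polynomial is $g_{\lambda/\mu}(\mathbf x;\boldsymbol\alpha,\boldsymbol\beta)=\det[e_{\lambda'_i-i-\mu'_j+j}(\mathbf x,\overline{\boldsymbol\alpha}_{j-1},\boldsymbol\beta_{\lambda'_i-1}/\overline{\boldsymbol\alpha}_{i-1},\boldsymbol\beta_{\mu'_j})]_{1\le i,j\le n}$, $n\ge\lambda_1$; $g_{\lambda/\mu}(\mathbf x_m;\ldots)$ is this with $\mathbf x=(x_1,\ldots,x_m)$. *)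

From HB Require Import structures.
From mathcomp Require Import all_boot all_order all_algebra.
Set Implicit Arguments. Unset Strict Implicit. Unset Printing Implicit Defensive.
Import Order.TTheory GRing.Theory Num.Theory.
Local Open Scope ring_scope.

Section Defs.
Variable R : comRingType.

Fixpoint elemsym (s : seq R) (k : nat) : R :=
  match s with
  | [::] => (k == 0%N)%:R
  | x :: s' => elemsym s' k + (if k is k'.+1 then x * elemsym s' k' else 0)
  end.

Fixpoint homsym (s : seq R) (k : nat) : R :=
  match s with
  | [::] => (k == 0%N)%:R
  | x :: s' => \sum_(j < k.+1) x ^+ j * homsym s' (k - j)
  end.

Definition esuper (x w : seq R) (n : int) : R :=
  match n with
  | Posz n => \sum_(i < n.+1) (-1) ^+ (n - i) * elemsym x i * homsym w (n - i)
  | Negz _ => 0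
  end.

Definition wseg (w : int -> R) (p q : int) : seq R :=
  if p <= q then mkseq (fun k => w (p + k%:Z)) (absz (q - p + 1)) else [::].

Definition ext0 (w : nat -> R) (k : int) : R :=
  if 0 < k then w (absz k) else 0.

End Defs.

(* conjugate partition: lam'_i = #{parts >= i}  (i >= 1) *)
Definition conjp (lam : seq nat) (i : nat) : nat := count (fun p => i <= p)%N lam.

Definition is_partition (lam : seq nat) : bool := sorted geq lam.

Definition skew_shape (lam mu : seq nat) : Prop :=
  is_partition lam /\ is_partition mu /\ (forall i, nth 0%N mu i <= nth 0%N lam i)%N.

(* contents c(i,j) = j - i + c0; for an r-shape c0 = r - 1 + lam'_1,
   for a usual skew shape c0 = 0 *)
Definition content (c0 i j : int) : int := j - i + c0.
Definition rshape_off (lam : seq nat) (r : int) : int := r - 1 + (conjp lam 1)%:Z.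

(* column flags (1-based indices; only a_1..a_n, b_1..b_n matter) *)
Definition column_flags (lam mu : seq nat) (n : nat) (a b : nat -> int) : Prop :=
  (head 0%N lam <= n)%N /\
  forall i, (1 <= i < n)%N -> (conjp mu i < conjp lam i.+1)%N ->
    a i - a i.+1 <= (conjp mu i)%:Z - (conjp mu i.+1)%:Z + 1 /\
    b i - b i.+1 <= (conjp lam i)%:Z - (conjp lam i.+1)%:Z + 1.

(* conjugate flags: a'_j = a_j + c(gamma_j), gamma_j = (mu'_j + 1, j) top cell;
   b'_i = b_i + c(delta_i), delta_i = (lam'_i, i) bottom cell *)
Definition aconj (mu : seq nat) (c0 : int) (a : nat -> int) (j : nat) : int :=
  a j + content c0 ((conjp mu j)%:Z + 1) j%:Z.
Definition bconj (lam : seq nat) (c0 : int) (b : nat -> int) (i : nat) : int :=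
  b i + content c0 (conjp lam i)%:Z i%:Z.

Definition dind (lam mu : seq nat) (i j : nat) : int :=
  (conjp lam i)%:Z - i%:Z - (conjp mu j)%:Z + j%:Z.

Definition Sflag (R : comRingType) (lam mu : seq nat) (c0 : int) (n : nat)
    (a b : nat -> int) (y z : int -> R) : R :=
  \det (\matrix_(i < n, j < n)
    esuper (wseg y (a j.+1) (b i.+1))
           (wseg z (aconj mu c0 a j.+1) (bconj lam c0 b i.+1))
           (dind lam mu i.+1 j.+1)).

Definition gy (R : comRingType) (m : nat) (x alpha beta : nat -> R) (k : int) : R :=
  if (1 <= k) && (k <= m%:Z) then x (absz k)
  else if m%:Z < k then beta (absz (k - m%:Z)) else - alpha (absz (1 - k)).
Definition gz (R : comRingType) (m : nat) (alpha beta : nat -> R) (k : int) : R :=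
  if (1 <= k) && (k <= m%:Z) then 0
  else if m%:Z < k then - alpha (absz (k - m%:Z)) else beta (absz (1 - k)).

Definition gflag (R : comRingType) (lam mu : seq nat) (c0 : int) (n : nat)
    (a b : nat -> int) (m : nat) (x alpha beta : nat -> R) : R :=
  Sflag lam mu c0 n a b (gy m x alpha beta) (gz m alpha beta).

Definition gdual (R : comRingType) (lam mu : seq nat) (n : nat) (m : nat)
    (x alpha beta : nat -> R) : R :=
  \det (\matrix_(i < n, j < n)
    esuper (wseg (ext0 x) 1 m%:Z
              ++ wseg (fun k => - ext0 alpha k) 1 (j.+1%:Z - 1)
              ++ wseg (ext0 beta) 1 ((conjp lam i.+1)%:Z - 1))
           (wseg (fun k => - ext0 alpha k) 1 (i.+1%:Z - 1)
              ++ wseg (ext0 beta) 1 (conjp mu j.+1)%:Z)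
           (dind lam mu i.+1 j.+1)).

Definition prop35_rhs (R : comRingType) (lam mu : seq nat) (c0 : int) (n : nat)
    (a b : nat -> int) (m : nat) (x alpha beta : nat -> R) : R :=
  let tau (k : int) : int := 1 - k in
  let eta (k : int) : int := k - m%:Z in
  let abar := fun k => - ext0 alpha k in
  let bet := ext0 beta in
  \det (\matrix_(i < n, j < n)
    let aj := a j.+1 in let bi := b i.+1 in
    let a'j := aconj mu c0 a j.+1 in let b'i := bconj lam c0 b i.+1 in
    esuper (wseg (ext0 x) (Num.max 1 aj) (Num.min m%:Z bi)
              ++ wseg abar (tau bi) (tau aj)
              ++ wseg bet (eta aj) (eta bi))
           (wseg abar (eta a'j) (eta b'i)
              ++ wseg bet (tau b'i) (tau a'j))
           (dind lam mu i.+1 j.+1)).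

(* e_k(s) and h_k(s) are the k-th coefficients of prod_(c in s) (1 + cX) and of
   prod_(c in s) (1 + cX + c^2 X^2 + ...), so e_n(s / t) only depends on the multisets
   of nonzero entries of s and t.  Under the g-specialization the entries of y_{a..b}
   are the x_k for k in [a, b] and [1, m], the beta_{k-m} for k > m and the -alpha_{1-k}
   for k <= 0: up to order and up to the zeros alpha_k = beta_k = 0 (k <= 0), these are
   the entries of x_{u,v}, alphabar_{tau(b),tau(a)} and beta_{eta(a),eta(b)}; likewise
   for z.  This is a pure substitution identity, valid for any content offset and
   without the shape or flag hypotheses.
   For a usual skew shape with a_i = 2 - i and b_i = lam'_i + m - 1, the rows
   i > lam_1 of both determinants vanish below the diagonal and are 1 on it, since
   lam'_i = mu'_i = 0; in the other rows the segments of both sides differ only by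
   entries of nonpositive index, which are zero. *)

From mathcomp Require Import all_boot all_order all_algebra perm zify.
Set Implicit Arguments.
Unset Strict Implicit.
Unset Printing Implicit Defensive.

Import Order.TTheory GRing.Theory Num.Theory.
Local Open Scope ring_scope.

Section Windows.
Variable S : comPzSemiRingType.
Implicit Types (G : int -> S) (p q L c : int) (N : nat).

Lemma prod_ord_support (g : nat -> S) N d n :
  (d + n <= N)%N -> (forall i, ((i < d)%N || (d + n <= i)%N) -> g i = 1) ->
  \prod_(i < N) g i = \prod_(i < n) g (i + d)%N.
Proof.
move=> leN g1; rewrite -(big_mkord xpredT) (@big_cat_nat _ _ _ d 0 N _ _ (leq0n d)) /=; last first.
  exact: leq_trans (leq_addr n d) leN.
rewrite (@big_cat_nat _ _ _ (d + n) d N _ _ (leq_addr n d) leN) /= big1_seq ?mul1r; last first.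
  by move=> i /andP[_]; rewrite mem_index_iota => /andP[_ lt_id]; rewrite g1 ?lt_id.
rewrite [X in _ * X]big1_seq ?mulr1; last first.
  by move=> i /andP[_]; rewrite mem_index_iota => /andP[le_i _]; rewrite g1 ?le_i ?orbT.
by rewrite -{1}(add0n d) big_addn addKn big_mkord.
Qed.

Definition window (G : int -> S) (L : int) (N : nat) := \prod_(i < N) G (L + i%:Z).

Lemma window_rev G L N c :
  window G L N = window (fun k => G (c - k)) (c - (L + N%:Z - 1)) N.
Proof.
rewrite /window (reindex_inj rev_ord_inj) /=.
by apply: eq_bigr => -[i lt_iN] _; congr (G _); rewrite /=; lia.
Qed.

Lemma window_shift G L N c : window G L N = window (fun k => G (k + c)) (L - c) N.
Proof. by apply: eq_bigr => i _; congr (G _); lia. Qed.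

Lemma window_mul G1 G2 L N :
  window G1 L N * window G2 L N = window (fun k => G1 k * G2 k) L N.
Proof. by rewrite /window -big_split. Qed.

Lemma eq_window G1 G2 L N : G1 =1 G2 -> window G1 L N = window G2 L N.
Proof. by move=> eqG; apply: eq_bigr => i _; apply: eqG. Qed.

Lemma prod_wseg_window (R : comRingType) (F : R -> S) (w : int -> R) p q L N :
  (p <= q -> L <= p /\ q < L + N%:Z) ->
  \prod_(c <- wseg w p q) F c
  = window (fun k => if (p <= k) && (k <= q) then F (w k) else 1) L N.
Proof.
set G := (X in window X); rewrite /wseg /window.
case: ifP => [le_pq /(_ isT) [le_Lp lt_qN] | lt_qp _]; last first.
  rewrite big_nil big1 // => i _; rewrite /G ifF //.
  by apply/negbTE/negP => /andP[]; move/negbT: lt_qp; lia.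
rewrite (@prod_ord_support (fun i => G (L + i%:Z)) N (absz (p - L)) (absz (q - p + 1))).
- rewrite big_map -[X in iota 0 X]subn0 big_mkord; apply: eq_bigr => -[i lt_i] _; rewrite /G /= ifT; last by lia.
  by congr (F (w _)); lia.
- by lia.
- by move=> i out_i; rewrite /G ifF //; apply/negbTE/negP => /andP[]; lia.
Qed.

End Windows.

Section NonzeroEntries.
Variable R : comRingType.
Implicit Types (s t : seq R) (p q : int).

Lemma elemsym_coef s k : elemsym s k = (\prod_(c <- s) (1 + c *: 'X))`_k.
Proof.
elim: s k => [|c s IHs] k /=; first by rewrite big_nil coef1.
rewrite big_cons mulrDl mul1r -scalerAl coefD coefZ coefXM IHs.
by case: k => [|k] /=; rewrite ?mulr0 ?addr0 ?IHs.
Qed.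

Lemma homsym_coef s {k N} :
  (k < N)%N -> homsym s k = (\prod_(c <- s) \poly_(j < N) c ^+ j)`_k.
Proof.
elim: s k => [|c s IHs] k lt_kN /=; first by rewrite big_nil coef1.
rewrite big_cons coefM; apply: eq_bigr => -[j /=]; rewrite ltnS => le_jk _.
rewrite coef_poly (leq_ltn_trans le_jk lt_kN) IHs //.
exact: leq_ltn_trans (leq_subr j k) lt_kN.
Qed.

(* The nonzero entries of [s] and [t] agree as multisets. *)
Definition same_nonzero s t := forall F : R -> {poly R}, F 0 = 1 ->
  \prod_(c <- s) F c = \prod_(c <- t) F c.

Lemma same_nonzero_cat s1 s2 t1 t2 :
  same_nonzero s1 t1 -> same_nonzero s2 t2 -> same_nonzero (s1 ++ s2) (t1 ++ t2).
Proof. by move=> eq1 eq2 F F0; rewrite !big_cat eq1 ?eq2. Qed.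

Lemma esuper_same_nonzero s t s' t' d :
  same_nonzero s t -> same_nonzero s' t' -> esuper s s' d = esuper t t' d.
Proof.
move=> eq_st eq_st'; case: d => // d /=; apply: eq_bigr => i _.
rewrite !elemsym_coef eq_st ?scale0r ?addr0 //.
rewrite !(homsym_coef _ (ltnSn (d - i))) eq_st' //.
by apply/polyP => -[|j]; rewrite coef_poly coef1 expr0n //; case: ifP.
Qed.

Lemma same_nonzero_wseg1 (w : int -> R) p q (q' : int) :
  (forall k, k <= 0 -> w k = 0) -> p <= 1 -> q = q' ->
  same_nonzero (wseg w p q) (wseg w 1 q').
Proof.
move=> w0 le_p1 <- F F0.
set N := absz (q - p + 1).
rewrite (@prod_wseg_window _ _ F w p q p N); last lia.
rewrite (@prod_wseg_window _ _ F w 1 q p N); last lia.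
apply: eq_window => k; case: ifP => ?; case: ifP => ? //; try lia.
by rewrite w0 ?F0 //; lia.
Qed.

End NonzeroEntries.

Lemma elemsym0 (R : comRingType) (s : seq R) : elemsym s 0 = 1.
Proof. by elim: s => //= c s ->; rewrite addr0. Qed.

Lemma homsym0 (R : comRingType) (s : seq R) : homsym s 0 = 1.
Proof. by elim: s => //= c s IHs; rewrite big_ord1 expr0 mul1r subn0. Qed.

Lemma esuper_lt0 (R : comRingType) (s t : seq R) d : d < 0 -> esuper s t d = 0.
Proof. by case: d. Qed.

Lemma esuper0 (R : comRingType) (s t : seq R) : esuper s t 0 = 1.
Proof. by rewrite /= big_ord1 expr0 mul1r elemsym0 homsym0 mul1r. Qed.

Section Specialization.
Variables (R : comRingType) (m : nat) (x alpha beta : nat -> R).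
Variables (S : comPzSemiRingType) (F : R -> S).
Hypothesis F0 : F 0 = 1.
Implicit Types a b : int.

Lemma prod_wseg_gy a b :
  \prod_(c <- wseg (gy m x alpha beta) a b) F c =
  \prod_(c <- wseg (ext0 x) (Num.max 1 a) (Num.min m%:Z b)) F c
  * \prod_(c <- wseg (fun k => - ext0 alpha k) (1 - b) (1 - a)) F c
  * \prod_(c <- wseg (ext0 beta) (a - m%:Z) (b - m%:Z)) F c.
Proof.
have [le_ab | lt_ba] := boolP (a <= b); last first.
  by rewrite /wseg !ifF ?big_nil ?mulr1 //; apply/negbTE; lia.
set N := absz (b - a + 1).
rewrite (@prod_wseg_window _ _ F _ _ _ a N); last lia.
rewrite (@prod_wseg_window _ _ F _ _ _ a N); last lia.
rewrite (@prod_wseg_window _ _ F _ _ _ (1 - b) N); last lia.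
rewrite (@prod_wseg_window _ _ F _ _ _ (a - m%:Z) N); last lia.
(* Reflect the alpha-window about 1/2 and shift the beta-window by m, so that all
   windows start at a and can be compared pointwise. *)
rewrite (window_rev _ (1 - b) N 1) (window_shift _ (a - m%:Z) N (- m%:Z)).
rewrite (_ : 1 - (1 - b + N%:Z - 1) = a); last lia.
rewrite (_ : a - m%:Z - - m%:Z = a); last lia.
rewrite !window_mul; apply: eq_window => k; rewrite /gy /ext0.
by repeat (case: ifP => ?); rewrite ?oppr0 ?F0 ?mul1r ?mulr1 //; lia.
Qed.

Lemma prod_wseg_gz a b :
  \prod_(c <- wseg (gz m alpha beta) a b) F c =
  \prod_(c <- wseg (fun k => - ext0 alpha k) (a - m%:Z) (b - m%:Z)) F c
  * \prod_(c <- wseg (ext0 beta) (1 - b) (1 - a)) F c.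
Proof.
have [le_ab | lt_ba] := boolP (a <= b); last first.
  by rewrite /wseg !ifF ?big_nil ?mulr1 //; apply/negbTE; lia.
set N := absz (b - a + 1).
rewrite (@prod_wseg_window _ _ F _ _ _ a N); last lia.
rewrite (@prod_wseg_window _ _ F _ _ _ (a - m%:Z) N); last lia.
rewrite (@prod_wseg_window _ _ F _ _ _ (1 - b) N); last lia.
rewrite (window_rev _ (1 - b) N 1) (window_shift _ (a - m%:Z) N (- m%:Z)).
rewrite (_ : 1 - (1 - b + N%:Z - 1) = a); last lia.
rewrite (_ : a - m%:Z - - m%:Z = a); last lia.
rewrite !window_mul; apply: eq_window => k; rewrite /gz /ext0.
by repeat (case: ifP => ?); rewrite ?oppr0 ?F0 ?mul1r ?mulr1 //; lia.
Qed.

End Specialization.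

Lemma gflagE (R : comRingType) lam mu c0 n (a b : nat -> int) m
    (x alpha beta : nat -> R) :
  gflag lam mu c0 n a b m x alpha beta = prop35_rhs lam mu c0 n a b m x alpha beta.
Proof.
congr (\det _); apply/matrixP => i j; rewrite !mxE.
apply: esuper_same_nonzero => F F0.
  by rewrite prod_wseg_gy // !big_cat /= mulrA.
by rewrite prod_wseg_gz // big_cat.
Qed.

Lemma perm_fix_tail n (s : 'S_n) K :
  (forall i : 'I_n, (K <= i)%N -> (i <= s i)%N) ->
  forall i : 'I_n, (K <= i)%N -> s i = i.
Proof.
move=> s_ge.
suff fix_s t (i : 'I_n) : (n - i <= t)%N -> (K <= i)%N -> s i = i.
  by move=> i; apply: (fix_s n); rewrite leq_subr.
elim: t i => [|t IHt] i le_ni le_Ki; first by have := ltn_ord i; lia.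
have [lt_i_si | ge_i_si] := ltnP i (s i); last first.
  by apply/val_inj/eqP; rewrite eqn_leq ge_i_si s_ge.
apply: perm_inj; apply: IHt; last by lia.
by have := ltn_ord (s i); lia.
Qed.

Lemma det_eq_unitriangular_tail (R : comRingType) n (A B : 'M[R]_n) K :
  (forall i j : 'I_n, (i < K)%N -> A i j = B i j) ->
  (forall i j : 'I_n, (K <= i)%N -> (j < i)%N -> A i j = 0 /\ B i j = 0) ->
  (forall i : 'I_n, (K <= i)%N -> A i i = 1 /\ B i i = 1) ->
  \det A = \det B.
Proof.
move=> eq_top low0 diag1; apply: eq_bigr => s _; congr (_ * _).
have [i /andP[le_Ki lt_si_i] | s_ge] := pickP [pred i : 'I_n | (K <= i)%N && (s i < i)%N].
  rewrite (bigD1 i) // [RHS](bigD1 i) //=.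
  by have [-> ->] := low0 i (s i) le_Ki lt_si_i; rewrite !mul0r.
have s_fix : forall i : 'I_n, (K <= i)%N -> s i = i.
  apply: perm_fix_tail => i le_Ki.
  by have /negbT := s_ge i; rewrite /= le_Ki -leqNgt.
apply: eq_bigr => i _; have [lt_iK | le_Ki] := ltnP i K; first exact: eq_top.
by rewrite s_fix //; have [-> ->] := diag1 i le_Ki.
Qed.

Lemma conjp_gt_head lam k : is_partition lam -> (head 0%N lam < k)%N -> conjp lam k = 0%N.
Proof.
case: lam => [|p lam] //= sorted_lam lt_pk; rewrite /conjp /= leqNgt lt_pk /=.
apply/eqP; rewrite -leqn0 leqNgt -has_count; apply/hasPn => q q_lam /=.
have le_qp : (q <= p)%N.
  by move: q q_lam; apply/allP; exact: order_path_min (rev_trans leq_trans) sorted_lam.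
by rewrite -ltnNge (leq_ltn_trans le_qp lt_pk).
Qed.

Lemma conjp_gt0 lam k : (0 < k <= head 0%N lam)%N -> (0 < conjp lam k)%N.
Proof. by case: lam => [|p lam] /andP[k_gt0 /= le_kp]; [lia | rewrite /conjp /= le_kp]. Qed.

Lemma ext0_nonpos (R : comRingType) (w : nat -> R) k : k <= 0 -> ext0 w k = 0.
Proof. by move=> k_le0; rewrite /ext0 ltNge k_le0. Qed.

Lemma prop35_rhs_skew (R : comRingType) lam mu n (a b : nat -> int) m
    (x alpha beta : nat -> R) :
  skew_shape lam mu ->
  (forall i, (1 <= i <= n)%N -> a i = 2 - i%:Z /\ b i = (conjp lam i)%:Z + m%:Z - 1) ->
  prop35_rhs lam mu 0 n a b m x alpha beta = gdual lam mu n m x alpha beta.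
Proof.
move=> [lam_part [mu_part mu_sub_lam]] flags.
have le_mu_lam : (head 0%N mu <= head 0%N lam)%N by rewrite -!nth0.
apply: (@det_eq_unitriangular_tail _ _ _ _ (head 0%N lam)) => [i j lt_iK | i j le_Ki lt_ji | i le_Ki];
  rewrite !mxE /=.
- have [a_j _] := flags j.+1 (ltn_ord j); have [_ b_i] := flags i.+1 (ltn_ord i).
  have lam'_gt0 : (0 < conjp lam i.+1)%N by apply: conjp_gt0; rewrite /=.
  rewrite /aconj /bconj /content a_j b_i; apply: esuper_same_nonzero;
    repeat apply: same_nonzero_cat; apply: same_nonzero_wseg1; try lia;
    by move=> k /ext0_nonpos ->; rewrite ?oppr0.
- have d_lt0 : dind lam mu i.+1 j.+1 < 0 by rewrite /dind conjp_gt_head //; lia.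
  by split; apply: esuper_lt0.
- have d0 : dind lam mu i.+1 i.+1 = 0 by rewrite /dind !conjp_gt_head //; lia.
  by rewrite d0; split; apply: esuper0.
Qed.

Theorem proposition3p5 (R : comRingType) (m : nat) (x alpha beta : nat -> R) :
  (forall (lam mu : seq nat) (r : int) (n : nat) (a b : nat -> int),
     skew_shape lam mu ->
     column_flags lam mu n a b ->
     gflag lam mu (rshape_off lam r) n a b m x alpha beta
     = prop35_rhs lam mu (rshape_off lam r) n a b m x alpha beta)
  /\
  (forall (lam mu : seq nat) (n : nat) (a b : nat -> int),
     skew_shape lam mu ->
     (head 0%N lam <= n)%N ->
     (forall i : nat, (1 <= i <= n)%N ->
        a i = 2 - i%:Z /\ b i = (conjp lam i)%:Z + m%:Z - 1) ->
     Sflag lam mu 0 n a b (gy m x alpha beta) (gz m alpha beta)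
       = gflag lam mu 0 n a b m x alpha beta
     /\ gflag lam mu 0 n a b m x alpha beta = gdual lam mu n m x alpha beta).
Proof.
split=> [lam mu r n a b _ _ | lam mu n a b skew _ flags]; first exact: gflagE.
by split; rewrite // gflagE; apply: prop35_rhs_skew.
Qed.
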